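(* Let $M=(m_{ij})$ be an $n\times n$ matrix of integers with $n\geq 3$ and $m_{ij}\geq 1$ for all $i,j$. Then $\mathrm{Cat}(M)\neq\emptyset$ if and only if for every $3\times 3$ submatrix $N$ of $M$ one has $\mathrm{Cat}(N)\neq\emptyset$.
   Context: For an $n\times n$ matrix $M=(m_{ij})$ with entries in the natural numbers, $\mathrm{Cat}(M)$ denotes the collection of categories $A$ with exactly $n$ distinct objects $x_1,\dots,x_n$ such that $|A(x_i,x_j)|=m_{ij}$ for all $i,j$, where $A(x_i,x_j)$ is the set of morphisms from $x_i$ to $x_j$. A $3\times 3$ submatrix of $M$ means $(m_{st})_{s,t\in S}$ for a $3$-element subset $S\subseteq\{1,\dots,n\}$ (same indices for rows and columns, in increasing order). *)

From mathcomp Require Import all_boot all_algebra.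
Set Implicit Arguments. Unset Strict Implicit. Unset Printing Implicit Defensive.

(* Since only cardinalities matter,
   the hom-set A(x_i,x_j) is represented by the finite type 'I_(M i j).
   comp i j k f g is the composite "g after f" for f : x_i -> x_j, g : x_j -> x_k. *)
Definition is_category (n : nat) (M : 'M[nat]_n)
    (cid : forall i : 'I_n, 'I_(M i i))
    (comp : forall i j k : 'I_n, 'I_(M i j) -> 'I_(M j k) -> 'I_(M i k)) : Prop :=
  [/\ (forall (i j : 'I_n) (f : 'I_(M i j)), comp i i j (cid i) f = f),
      (forall (i j : 'I_n) (f : 'I_(M i j)), comp i j j f (cid j) = f) &
      (forall (i j k l : 'I_n) (f : 'I_(M i j)) (g : 'I_(M j k)) (h : 'I_(M k l)),
          comp i k l (comp i j k f g) h = comp i j l f (comp j k l g h))].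

Definition Cat_nonempty (n : nat) (M : 'M[nat]_n) : Prop :=
  exists (cid : forall i : 'I_n, 'I_(M i i))
         (comp : forall i j k : 'I_n, 'I_(M i j) -> 'I_(M j k) -> 'I_(M i k)),
    is_category cid comp.

From mathcomp Require Import all_boot all_algebra.
From mathcomp Require Import zify.
From Stdlib Require Import FunctionalExtensionality.

Set Implicit Arguments. Unset Strict Implicit. Unset Printing Implicit Defensive.

(* If an object p has only its identity as endomorphism, composition through p
   is injective: from x;y one recovers x as (x;y);c and y as a;(x;y) for any
   a : p -> q, c : r -> p.  Hence P(j,i) P(i,k) <= P(j,k) whenever P(i,i) = 1,
   and the inequality is strict for k = j with P(j,j) > 1, since x;y = id_j
   would make j isomorphic to i.  Conversely, put A_y = P(i,y) and B_x = P(x,i)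
   for some i with P(i,i) = 1, or A = B = 1 if there is no such i.  The
   conditions are exactly what is needed for a category in which a
   non-identity morphism x -> y is a pair in B_x * A_y and the composite of
   (b,a) and (b',a') is (b,a').  All conditions involve at most three objects. *)

Definition cat_realizable (T : Type) (P : T -> T -> nat) : Prop :=
  exists (cid : forall i, 'I_(P i i))
         (comp : forall i j k, 'I_(P i j) -> 'I_(P j k) -> 'I_(P i k)),
  [/\ (forall i j (f : 'I_(P i j)), comp i i j (cid i) f = f),
      (forall i j (f : 'I_(P i j)), comp i j j f (cid j) = f) &
      (forall i j k l (f : 'I_(P i j)) (g : 'I_(P j k)) (h : 'I_(P k l)),
          comp i k l (comp i j k f g) h = comp i j l f (comp j k l g h))].

Lemma Cat_nonemptyE n (M : 'M[nat]_n) :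
  Cat_nonempty M <-> cat_realizable (fun i j => M i j).
Proof. by []. Qed.

Lemma cat_realizable_comp (T U : Type) (P : T -> T -> nat) (g : U -> T) :
  cat_realizable P -> cat_realizable (fun x y => P (g x) (g y)).
Proof.
case=> cid [comp [comp1f compf1 compA]].
by exists (fun x => cid (g x)), (fun x y z => comp (g x) (g y) (g z)).
Qed.

Lemma Cat_nonempty_mxsub n m (M : 'M[nat]_n) (g : 'I_m -> 'I_n) :
  Cat_nonempty (mxsub g g M) <-> cat_realizable (fun x y => M (g x) (g y)).
Proof.
change (cat_realizable (fun x y => mxsub g g M x y) <->
        cat_realizable (fun x y => M (g x) (g y))).
have -> : (fun x y => mxsub g g M x y) = (fun x y => M (g x) (g y)).
  by do 2![apply: functional_extensionality => ?]; rewrite mxE.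
by [].
Qed.

Definition hom_bounds (T : Type) (P : T -> T -> nat) : Prop :=
  (forall i j k, P i i = 1 -> P j i * P i k <= P j k) /\
  (forall i j, P i i = 1 -> P j j != 1 -> P j i * P i j < P j j).

Section TrivialEndomorphisms.

Variables (T : Type) (P : T -> T -> nat).
Variables (cid : forall i, 'I_(P i i))
          (comp : forall i j k, 'I_(P i j) -> 'I_(P j k) -> 'I_(P i k)).
Hypotheses (comp1f : forall i j (f : 'I_(P i j)), comp (cid i) f = f)
           (compf1 : forall i j (f : 'I_(P i j)), comp f (cid j) = f)
           (compA : forall i j k l (f : 'I_(P i j)) (g : 'I_(P j k)) (h : 'I_(P k l)),
              comp (comp f g) h = comp f (comp g h)).
Variables (p : T) (Pp1 : P p p = 1).

Lemma trivial_endo (u : 'I_(P p p)) : u = cid p.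
Proof.
apply: val_inj; case: u => [x +]; case: (cid p) => [y +] /=.
by rewrite Pp1 !ltnS !leqn0 => /eqP-> /eqP->.
Qed.

Lemma comp_through_inj q r (a : 'I_(P p q)) (c : 'I_(P r p)) :
  injective (fun x : 'I_(P q p) * 'I_(P p r) => comp x.1 x.2).
Proof.
have fstK (x : 'I_(P q p)) (y : 'I_(P p r)) : comp (comp x y) c = x.
  by rewrite compA (trivial_endo (comp y c)) compf1.
have sndK (x : 'I_(P q p)) (y : 'I_(P p r)) : comp a (comp x y) = y.
  by rewrite -compA (trivial_endo (comp a x)) comp1f.
move=> [x1 y1] [x2 y2] /= e.
by congr pair; [rewrite -(fstK x1 y1) e fstK | rewrite -(sndK x1 y1) e sndK].
Qed.

Lemma comp_through_neq1 q (x : 'I_(P q p)) (y : 'I_(P p q)) :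
  1 < P q q -> comp x y != cid q.
Proof.
move=> Pq_gt1; apply/eqP => xy1.
have all1 (u : 'I_(P q q)) : u = cid q.
  have -> : u = comp (comp x y) (comp u (comp x y)) by rewrite xy1 comp1f compf1.
  rewrite compA -(compA u x y) -(compA y (comp u x)).
  by rewrite (trivial_endo (comp y (comp u x))) comp1f xy1.
by have := all1 (Ordinal Pq_gt1); rewrite -(all1 (Ordinal (ltnW Pq_gt1))) => /(congr1 val).
Qed.

End TrivialEndomorphisms.

Lemma realizable_hom_bounds (T : Type) (P : T -> T -> nat) :
  (forall i j, 0 < P i j) -> cat_realizable P -> hom_bounds P.
Proof.
move=> P_gt0 [cid [comp [comp1f compf1 compA]]]; split=> [i j k Pi1 | i j Pi1 Pj1].
  have inj := comp_through_inj comp1f compf1 compA Pi1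
                 (Ordinal (P_gt0 i j)) (Ordinal (P_gt0 k i)).
  by have := leq_card _ inj; rewrite card_prod !card_ord.
have Pj_gt1 : 1 < P j j by move: (P_gt0 j j) Pj1; lia.
have inj := comp_through_inj comp1f compf1 compA Pi1
               (Ordinal (P_gt0 i j)) (Ordinal (P_gt0 j i)).
have im_sub : [set comp j i j x.1 x.2 | x in [set: 'I_(P j i) * 'I_(P i j)]]
                \subset [set~ cid j].
  apply/subsetP => _ /imsetP[[x y] _ ->].
  by rewrite in_setC1 (comp_through_neq1 comp1f compf1 compA Pi1).
move: (subset_leq_card im_sub); rewrite card_imset // cardsC1 cardsT card_prod !card_ord.
by move: Pj_gt1; lia.
Qed.

Section FactorizationCategory.

Variables (T : eqType) (P : T -> T -> nat) (a b : T -> nat).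
Hypotheses (a_gt0 : forall x, 0 < a x) (b_gt0 : forall x, 0 < b x).

(* A morphism f < b x * a y of x -> y stands for the pair (f %/ a y, f %% a y)
   in B_x * A_y; the morphisms above this range count as the pair (0, 0). *)
Definition hfst x y (f : nat) : nat := if f < b x * a y then f %/ a y else 0.
Definition hsnd x y (f : nat) : nat := if f < b x * a y then f %% a y else 0.
Definition pcomp x y z (f g : nat) : nat := hfst x y f * a z + hsnd y z g.

(* When P x x = 1 the identity of x is the pair (0, 0); otherwise it is
   b x * a x, the first morphism outside the pairs. *)
Definition is_idn x y (f : nat) : bool := [&& x == y, P x x != 1 & f == b x * a x].
Definition idn x : nat := if P x x == 1 then 0 else b x * a x.
Definition compn x y z (f g : nat) : nat :=
  if is_idn x y f then g else if is_idn y z g then f else pcomp x y z f g.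

Lemma hfst_lt x y f : hfst x y f < b x.
Proof. by rewrite /hfst; case: ifP => // f_lt; rewrite ltn_divLR. Qed.

Lemma hsnd_lt x y f : hsnd x y f < a y.
Proof. by rewrite /hsnd; case: ifP => // _; rewrite ltn_mod. Qed.

Lemma pcomp_lt x y z f g : pcomp x y z f g < b x * a z.
Proof. by have := hfst_lt x y f; have := hsnd_lt y z g; rewrite /pcomp; nia. Qed.

Lemma hfst_pcomp x y z f g : hfst x z (pcomp x y z f g) = hfst x y f.
Proof. by rewrite {1}/hfst pcomp_lt /pcomp divnMDl // divn_small ?addn0 ?hsnd_lt. Qed.

Lemma hsnd_pcomp x y z f g : hsnd x z (pcomp x y z f g) = hsnd y z g.
Proof. by rewrite {1}/hsnd pcomp_lt /pcomp modnMDl modn_small ?hsnd_lt. Qed.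

Lemma is_idn_pcomp x y z f g : is_idn x z (pcomp x y z f g) = false.
Proof.
apply/negbTE/and3P => -[/eqP xz _ /eqP fe].
by have := pcomp_lt x y z f g; rewrite fe -xz ltnn.
Qed.

Lemma is_idn_eq x y f : is_idn x y f -> x = y.
Proof. by case/and3P=> /eqP. Qed.

Lemma compn_idnl x y z f g : is_idn x y f -> compn x y z f g = g.
Proof. by rewrite /compn => ->. Qed.

Lemma compn_idnr x y z f g :
  is_idn x y f = false -> is_idn y z g -> compn x y z f g = f.
Proof. by rewrite /compn => -> ->. Qed.

Lemma compn_pcomp x y z f g :
  is_idn x y f = false -> is_idn y z g = false -> compn x y z f g = pcomp x y z f g.
Proof. by rewrite /compn => -> ->. Qed.

Lemma compnA x y z w f g h :
  compn x z w (compn x y z f g) h = compn x y w f (compn y z w g h).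
Proof.
case idf: (is_idn x y f).
  by have xy := is_idn_eq idf; subst y; rewrite !(compn_idnl _ _ idf).
case idg: (is_idn y z g).
  have yz := is_idn_eq idg; subst z.
  by rewrite (compn_idnr idf idg) (compn_idnl _ _ idg).
have -> := compn_pcomp idf idg.
case idh: (is_idn z w h).
  have zw := is_idn_eq idh; subst w.
  by rewrite (compn_idnr idg idh) (compn_idnr (is_idn_pcomp _ _ _ _ _) idh) compn_pcomp.
rewrite (compn_pcomp idg idh) !compn_pcomp ?is_idn_pcomp //.
by rewrite {1}/pcomp hfst_pcomp [RHS]/pcomp hsnd_pcomp.
Qed.

Hypothesis ba_le : forall x y, b x * a y <= P x y.
Hypothesis ba_lt : forall x, P x x != 1 -> b x * a x < P x x.
Hypothesis P_trivial_endo :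
  forall x, P x x = 1 -> (forall y, P x y = a y) /\ (forall y, P y x = b y).

Lemma is_idn_trivial x y f : (P x x == 1) || (P y y == 1) -> is_idn x y f = false.
Proof. by rewrite /is_idn; case: (x =P y) => [<- | //]; rewrite orbb => ->. Qed.

Lemma idn_lt x : idn x < P x x.
Proof. by rewrite /idn; case: eqP => [-> | /eqP /ba_lt]. Qed.

Lemma compn_lt x y z f g : f < P x y -> g < P y z -> compn x y z f g < P x z.
Proof.
rewrite /compn; case: ifP => [/is_idn_eq-> // | _].
case: ifP => [/is_idn_eq<- // | _ _ _].
exact: leq_trans (pcomp_lt x y z f g) (ba_le x z).
Qed.

Lemma compn1f x y f : f < P x y -> compn x x y (idn x) f = f.
Proof.
rewrite /idn; case: eqP => [Px1 | /eqP Px1 _]; last first.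
  by rewrite compn_idnl // /is_idn !eqxx Px1.
have [Pxy Pyx] := P_trivial_endo Px1; have bx1 : b x = 1 by rewrite -Pyx.
rewrite compn_pcomp ?is_idn_trivial ?Px1 ?eqxx //.
by rewrite /pcomp /hfst /hsnd bx1 !mul1n Pxy => lt_f; rewrite lt_f modn_small // div0n if_same.
Qed.

Lemma compnf1 x y f : f < P x y -> compn x y y f (idn y) = f.
Proof.
rewrite /idn; case: eqP => [Py1 | /eqP Py1 _].
  have [Pyx Pxy] := P_trivial_endo Py1; have ay1 : a y = 1 by rewrite -Pyx.
  rewrite compn_pcomp ?is_idn_trivial ?Py1 ?eqxx ?orbT //.
  by rewrite /pcomp /hfst /hsnd ay1 !muln1 Pxy => lt_f; rewrite lt_f divn1 mod0n if_same addn0.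
case idf: (is_idn x y f); last by rewrite compn_idnr // /is_idn !eqxx Py1.
by case/and3P: idf => /eqP-> _ /eqP->; rewrite compn_idnl // /is_idn !eqxx Py1.
Qed.

Lemma realizable_of_factorization : cat_realizable P.
Proof.
exists (fun x => Ordinal (idn_lt x)).
exists (fun x y z (f : 'I_(P x y)) (g : 'I_(P y z)) =>
          Ordinal (compn_lt (ltn_ord f) (ltn_ord g))).
split=> *; apply: val_inj => /=; [exact: compn1f | exact: compnf1 | exact: compnA].
Qed.

End FactorizationCategory.

Lemma hom_bounds_realizable (T : finType) (P : T -> T -> nat) :
  (forall i j, 0 < P i j) -> hom_bounds P -> cat_realizable P.
Proof.
move=> P_gt0 [mul_le mul_lt].
case: (pickP (fun x => P x x == 1)) => [p /eqP Pp1 | no_trivial]; last first.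
  apply: (@realizable_of_factorization _ P (fun=> 1) (fun=> 1)) => // x.
  - by move: (P_gt0 x x); lia.
  - by move=> Px1; move: (no_trivial x); rewrite /= Px1.
apply: (@realizable_of_factorization _ P (P p) (P ^~ p)) => // x.
- by move=> y; apply: mul_le.
- exact: mul_lt.
move=> Px1; have [Pxp1 Ppx1] : P x p = 1 /\ P p x = 1.
  by move: (mul_le p x x Pp1) (P_gt0 p x) (P_gt0 x p); rewrite Px1; nia.
split=> y.
  by move: (mul_le x p y Px1) (mul_le p x y Pp1); rewrite Pxp1 Ppx1; lia.
by move: (mul_le x y p Px1) (mul_le p y x Pp1); rewrite Pxp1 Ppx1; lia.
Qed.

Lemma exists_superset_card (T : finType) (A : {set T}) m :
  #|A| <= m <= #|T| -> exists2 B : {set T}, A \subset B & #|B| = m.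
Proof.
case/andP=> Am mT; have [d def_m] : exists d, m = #|A| + d.
  by exists (m - #|A|); rewrite subnKC.
rewrite {}def_m {Am} in mT *; elim: d A mT => [|d IHd] A AdT.
  by exists A; rewrite ?addn0.
have [x Ax] : exists x, x \in ~: A.
  by apply/card_gt0P; move: AdT (cardsC A); rewrite addnS; lia.
have [|B xAB cardB] := IHd (x |: A).
  by rewrite cardsU1 -in_setC Ax add1n addSnnS.
exists B; first by apply: subset_trans xAB; apply: subsetUr.
by rewrite cardB cardsU1 -in_setC Ax add1n addSnnS.
Qed.

Lemma sorted_enum_ord n (A : {set 'I_n}) : sorted ltn (map val (enum A)).
Proof.
rewrite -[enum _](eq_filter (mem_enum _)) -(eq_filter (mem_map val_inj _)).
by rewrite -filter_map (sorted_filter ltn_trans) // unlock val_ord_enum iota_ltn_sorted.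
Qed.

Lemma increasing_cover n m (A : {set 'I_n}) :
  #|A| <= m <= n ->
  exists2 g : 'I_m -> 'I_n, (forall a b : 'I_m, a < b -> g a < g b) & A \subset codom g.
Proof.
case/andP=> Am mn.
have [|B AB cardB] := @exists_superset_card _ A m; first by rewrite Am card_ord.
have sizeB : size (enum B) = m by rewrite -cardE.
pose g (a : 'I_m) := nth (widen_ord mn a) (enum B) a.
have val_g (a : 'I_m) : val (g a) = nth 0 (map val (enum B)) a.
  by rewrite (nth_map (widen_ord mn a)) ?sizeB.
exists g => [a b ab | ].
  rewrite !val_g; apply: (sorted_ltn_nth ltn_trans) => //; first exact: sorted_enum_ord.
  by rewrite inE size_map sizeB.
  by rewrite inE size_map sizeB.
apply/subsetP => x /(subsetP AB); rewrite -mem_enum => xB.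
have ix : index x (enum B) < m by rewrite -sizeB index_mem.
by apply/codomP; exists (Ordinal ix); rewrite /g /= nth_index.
Qed.

Lemma hom_bounds_of_covers (T : eqType) (P : T -> T -> nat) m :
  (forall i j k : T, exists2 g : 'I_m -> T,
     [/\ i \in codom g, j \in codom g & k \in codom g] &
     hom_bounds (fun x y => P (g x) (g y))) ->
  hom_bounds P.
Proof.
move=> cover; split=> [i j k | i j].
  have [g [/codomP[p ->] /codomP[q ->] /codomP[r ->]] [mul_le _]] := cover i j k.
  exact: mul_le.
have [g [/codomP[p ->] /codomP[q ->] _] [_ mul_lt]] := cover i j j.
exact: mul_lt.
Qed.

Theorem mainTheorem9 (n : nat) (M : 'M[nat]_n) :
  3 <= n ->
  (forall i j : 'I_n, 1 <= M i j) ->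
  (Cat_nonempty M <->
   forall f : 'I_3 -> 'I_n, (forall a b : 'I_3, a < b -> f a < f b) ->
     Cat_nonempty (mxsub f f M)).
Proof.
move=> n_ge3 M_gt0; split=> [M_cat f _ | sub_cat].
  exact/Cat_nonempty_mxsub/cat_realizable_comp.
apply/Cat_nonemptyE/hom_bounds_realizable => //.
apply: (@hom_bounds_of_covers _ _ 3) => i j k.
have [|g g_incr ijk_g] := @increasing_cover n 3 [set i; j; k].
  by rewrite n_ge3 andbT (leq_trans (leq_card_setU _ _)) // cards2 cards1; case: (i != j).
exists g; first by rewrite !(subsetP ijk_g) // !inE eqxx ?orbT.
apply: realizable_hom_bounds => [x y | ]; first exact: M_gt0.
exact/Cat_nonempty_mxsub/(sub_cat g g_incr).
Qed.
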